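(* Let $k \geq 1$ and $n > 2k$, and let $X^0, \ldots, X^{n-1}$ each code an ordered $2k$-partition of $\omega$, $X^p = X^p_0 \oplus \cdots \oplus X^p_{2k-1}$. Then $\mathrm{Cross}(X^0,\ldots,X^{n-1};2)$ codes an ordered $2k\binom{n}{2}$-partition of $\omega$. Consequently, if $S_0, \ldots, S_{n-1}$ are classes of codes of ordered $2k$-partitions of $\omega$, then every member of $\mathrm{Cross}(S_0,\ldots,S_{n-1};2)$ codes an ordered $2k\binom{n}{2}$-partition of $\omega$.
   Context: A set $X = X_0 \oplus \cdots \oplus X_{m-1}$ codes an ordered $m$-partition of $\omega$ if $\bigcup_{i<m} X_i = \omega$ (the parts need not be disjoint). For ordered $2k$-partitions $X^0,\ldots,X^{n-1}$, $\mathrm{Cross}(X^0,\ldots,X^{n-1};2) = \bigoplus_{j<2k,\ p<q\leq n-1} (X^p_j \cap X^q_j)$ (a join of $2k\binom{n}{2}$ sets in some fixed order). For classes $S_0,\ldots,S_{n-1}$, $\mathrm{Cross}(S_0,\ldots,S_{n-1};2)$ is the class of all $\mathrm{Cross}(X^0,\ldots,X^{n-1};2)$ with $X^p \in S_p$ for each $p \leq n-1$. *)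

From mathcomp Require Import all_boot.
Set Implicit Arguments. Unset Strict Implicit. Unset Printing Implicit Defensive.

Definition natset := nat -> Prop.

(* join of m sets: x \in X_0 (+) ... (+) X_{m-1}  iff  x = m*y + i, i < m, y \in X_i *)
Definition join (m : nat) (F : nat -> natset) : natset :=
  fun x => F (x %% m) (x %/ m).

Definition part (m : nat) (X : natset) (i : nat) : natset :=
  fun y => X (m * y + i).

Definition codes_partition (m : nat) (X : natset) : Prop :=
  forall y : nat, exists i : nat, i < m /\ part m X i y.

Definition cross_index (k n : nat) : seq (nat * nat * nat) :=
  [seq (j, pq.1, pq.2) | j <- iota 0 (2 * k),
     pq <- [seq (p, q) | p <- iota 0 n, q <- iota p.+1 (n - p.+1)]].

Definition cross (k n : nat) (Xs : nat -> natset) : natset :=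
  join (2 * k * 'C(n, 2))
    (fun i y => let: (j, p, q) := nth (0, 0, 0) (cross_index k n) i in
                part (2 * k) (Xs p) j y /\ part (2 * k) (Xs q) j y).

Definition cross_class (k n : nat) (S : nat -> natset -> Prop) : natset -> Prop :=
  fun Y => exists Xs : nat -> natset,
    (forall p, p < n -> S p (Xs p)) /\ Y = cross k n Xs.

(** Each set [Xs p] covers a given [y] by some part [j p < 2k]; since there are
    [n > 2k] sets, two of them, [p < q], use the same part [j].  Then [y] lies in
    [X^p_j ∩ X^q_j], which is one of the parts of the cross join. *)

From mathcomp Require Import all_boot.
From Stdlib Require ClassicalEpsilon.

Lemma pigeonhole_rel (m n : nat) (R : nat -> nat -> Prop) :
  m < n -> (forall p, p < n -> exists i, i < m /\ R p i) ->
  exists p q j, [/\ p < q < n, j < m, R p j & R q j].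
Proof.
move=> lt_mn cover.
have witness (p : 'I_n) : {j : 'I_m | R p j}.
  apply: ClassicalEpsilon.constructive_indefinite_description.
  have [j [lt_jm Rpj]] := cover p (ltn_ord p).
  by exists (Ordinal lt_jm).
pose f p := sval (witness p).
have /injectivePn [p [q neq_pq eq_f]] : ~~ injectiveb f.
  by apply/injectiveP => /leq_card; rewrite !card_ord leqNgt lt_mn.
have Rp := svalP (witness p); have Rq := svalP (witness q).
rewrite -/(f p) eq_f in Rp; rewrite -/(f q) in Rq.
case: (ltngtP p q) => [lt_pq | lt_qp | /val_inj eq_pq].
- by exists p, q, (f q); rewrite lt_pq ltn_ord.
- by exists q, p, (f q); rewrite lt_qp ltn_ord.
- by rewrite eq_pq eqxx in neq_pq.
Qed.

Lemma part_join (m : nat) (F : nat -> natset) (i y : nat) :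
  i < m -> part m (join m F) i y = F i y.
Proof.
move=> lt_im; rewrite /part /join mulnC modnMDl modn_small //.
by rewrite divnMDl ?divn_small ?addn0 //; case: m lt_im.
Qed.

Lemma size_cross_index (k n : nat) : size (cross_index k n) = 2 * k * 'C(n, 2).
Proof.
rewrite /cross_index size_allpairs size_iota size_allpairs_dep; congr (_ * _).
rewrite -bin2_sum big_nat_rev /= sumnE big_map /index_iota subn0 add0n.
by apply: eq_bigr => i _; rewrite size_iota.
Qed.

Lemma mem_cross_index (k n j p q : nat) :
  j < 2 * k -> p < q < n -> (j, p, q) \in cross_index k n.
Proof.
move=> lt_j /andP[lt_pq lt_qn].
apply/allpairsP; exists (j, (p, q)); split; rewrite ?mem_iota //=.
have lt_pn := ltn_trans lt_pq lt_qn.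
by apply/allpairsPdep; exists p, q; rewrite !mem_iota lt_pq subnKC.
Qed.

Lemma part_cross (k n j p q : nat) (Xs : nat -> natset) (y : nat) :
  j < 2 * k -> p < q < n ->
  part (2 * k) (Xs p) j y -> part (2 * k) (Xs q) j y ->
  part (2 * k * 'C(n, 2)) (cross k n Xs) (index (j, p, q) (cross_index k n)) y.
Proof.
move=> lt_j lt_pqn Xp Xq.
have mem_jpq : (j, p, q) \in cross_index k n by exact: mem_cross_index.
rewrite /cross part_join ?nth_index //.
by rewrite -size_cross_index index_mem.
Qed.

Lemma codes_partition_cross (k n : nat) (Xs : nat -> natset) :
  2 * k < n -> (forall p, p < n -> codes_partition (2 * k) (Xs p)) ->
  codes_partition (2 * k * 'C(n, 2)) (cross k n Xs).
Proof.
move=> lt_2k_n covers y.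
have [p [q [j [lt_pqn lt_j Xp Xq]]]] :=
  @pigeonhole_rel _ _ (fun p j => part (2 * k) (Xs p) j y) lt_2k_n
    (fun p lt_pn => covers p lt_pn y).
exists (index (j, p, q) (cross_index k n)); split; last exact: part_cross.
by rewrite -size_cross_index index_mem mem_cross_index.
Qed.

Theorem lemma6p1 (k n : nat) (hk : 1 <= k) (hn : 2 * k < n) :
  (forall Xs : nat -> natset,
     (forall p, p < n -> codes_partition (2 * k) (Xs p)) ->
     codes_partition (2 * k * 'C(n, 2)) (cross k n Xs)) /\
  (forall S : nat -> natset -> Prop,
     (forall p, p < n -> forall X, S p X -> codes_partition (2 * k) X) ->
     forall Y, cross_class k n S Y -> codes_partition (2 * k * 'C(n, 2)) Y).
Proof.
split=> [Xs|S S_covers Y [Xs [Xs_in_S ->]]]; first exact: codes_partition_cross.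
apply: codes_partition_cross => // p lt_pn.
exact: S_covers (Xs_in_S p lt_pn).
Qed.
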